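(* Let $n\ge1$, $\tau\in\mathbb R$, and let $P_1,\dots,P_J$ be Hermitian operators on $(\mathbb C^2)^{\otimes n}$, each equal to $\pm P$ for some non-identity Pauli string $P\in\{I,X,Y,Z\}^{\otimes n}\setminus\{I^{\otimes n}\}$. Define $$A=\Big(\prod_{j=1}^{J} e^{-\tau P_j}\Big)\,\mathbb I\,\Big(\prod_{j=J}^{1} e^{-\tau P_j}\Big),$$ where the first product is ordered $e^{-\tau P_1}e^{-\tau P_2}\cdots e^{-\tau P_J}$ and the second $e^{-\tau P_J}\cdots e^{-\tau P_1}$. Then $\operatorname{Tr}[A]\ge 2^n$. *)

From HB Require Import structures.
From mathcomp Require Import all_boot all_order all_algebra.
From mathcomp Require Import all_classical all_reals all_analysis.
From mathcomp Require Import complex.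
Set Implicit Arguments. Unset Strict Implicit. Unset Printing Implicit Defensive.
Import Order.TTheory GRing.Theory Num.Theory numFieldNormedType.Exports.
Local Open Scope ring_scope.
Local Open Scope complex_scope.

Section Pauli.
Variable R : realType.

(* single-qubit Pauli matrices, indexed 0 = I, 1 = X, 2 = Y, 3 = Z *)
Definition pauli1 (k : 'I_4) : 'M[R[i]]_2 :=
  \matrix_(a < 2, b < 2)
    match val k with
    | 0%N => if a == b then 1 else 0
    | 1%N => if a == b then 0 else 1
    | 2%N => if a == b then 0
             else if val a == 0%N then - 'i else 'i
    | _ => if a == b then (if val a == 0%N then 1 else -1) else 0
    end.

Definition qbit n (a : 'I_(2 ^ n)) (k : 'I_n) : 'I_2 :=
  inord (odd (val a %/ 2 ^ k)).

(* Pauli string s_0 \otimes ... \otimes s_{n-1} on (C^2)^{\otimes n}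
   (entries of the Kronecker product, written out) *)
Definition pauli_string n (s : {ffun 'I_n -> 'I_4}) : 'M[R[i]]_(2 ^ n) :=
  \matrix_(a, b) \prod_(k < n) pauli1 (s k) (qbit a k) (qbit b k).

Definition nonidentity n (s : {ffun 'I_n -> 'I_4}) : Prop := exists k, s k != 0.

Definition adjmx m (A : 'M[R[i]]_m) : 'M[R[i]]_m := \matrix_(a, b) (A b a)^*.
Definition is_hermitian m (A : 'M[R[i]]_m) : Prop := adjmx A = A.

Definition expm m (A : 'M[R[i]]_m) : 'M[R[i]]_m :=
  \matrix_(a, b)
    ((limn (series (fun k : nat => @complex.Re R ((A ^+ k) a b / (k`!)%:R)))) +i*
     (limn (series (fun k : nat => @complex.Im R ((A ^+ k) a b / (k`!)%:R))))).

End Pauli.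

(* Each P_j squares to the identity, so exp(-tau P_j) = cosh tau - sinh tau P_j,
   which is Hermitian.  A non-identity Pauli string anticommutes with some Pauli
   string Q, and conjugation by Q turns cosh tau - sinh tau P_j into
   cosh tau + sinh tau P_j; the product of the two is (cosh^2 - sinh^2) I = I, so
   det(exp(-tau P_j))^2 = 1.  Hence A = M M^* with M the product of the
   exponentials and |det M| = 1: A is positive semidefinite with determinant 1,
   and AM-GM on its eigenvalues gives Tr A >= 2^n. *)

From HB Require Import structures.
From mathcomp Require Import all_boot all_order all_algebra.
From mathcomp Require Import all_classical all_reals all_analysis.
From mathcomp Require Import complex ring.

Set Implicit Arguments.
Unset Strict Implicit.
Unset Printing Implicit Defensive.

Import Order.TTheory GRing.Theory Num.Theory numFieldNormedType.Exports.
Local Open Scope ring_scope.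

Lemma det_prodmx (R : comNzRingType) n J (F : 'I_J -> 'M[R]_n) :
  \det (\prod_(j < J) F j) = \prod_(j < J) \det (F j).
Proof. by apply: big_morph => [A B|]; rewrite ?det_mulmx ?det1. Qed.

Section GramMatrix.
Local Open Scope sesquilinear_scope.
Variable C : numClosedFieldType.

Lemma det_gram n (M : 'M[C]_n) : \det (M *m M^t*) = \det M * (\det M)^*.
Proof. by rewrite det_mulmx -map_trmx det_tr (det_map_mx Num.conj_op). Qed.

Lemma mxtrace_gram_ge n (M : 'M[C]_n) :
  \det (M *m M^t*) = 1 -> n%:R <= \tr (M *m M^t*).
Proof.
set H := M *m M^t* => detH1.
have /orthomx_spectralP : H \is normalmx.
  by apply/normalmxP; rewrite /H trmx_mul map_mxM trmxCK.
set P := spectralmx H; set d := spectral_diag H.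
have /unitarymxP PPt : P \is unitarymx by apply: spectral_unitarymx.
rewrite invmx_unitary ?spectral_unitarymx // => HE.
have Dd : diag_mx d = (P *m M) *m (P *m M)^t*.
  by rewrite trmx_mul map_mxM !mulmxA -(mulmxA P M) -/H HE !mulmxA PPt mul1mx
             -mulmxA PPt mulmx1.
have d_ge0 i : 0 <= d 0 i.
  move/matrixP/(_ i i): Dd; rewrite mxE eqxx mulr1n => ->.
  by rewrite mxE sumr_ge0 // => k _; rewrite !mxE mul_conjC_ge0.
have trH : \tr H = \sum_i d 0 i.
  by rewrite HE mxtrace_mulC mulmxA PPt mul1mx mxtrace_diag.
have prod_d : \prod_i d 0 i = 1.
  have detP : \det P * (\det P)^* = 1 by rewrite -det_gram PPt det1.
  by rewrite -det_diag Dd det_gram det_mulmx rmorphM mulrACA detP mul1r -det_gram.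
have trH_ge0 : 0 <= \tr H by rewrite trH sumr_ge0.
have [n0|n_gt0] := posnP n; first by rewrite [in n%:R]n0.
have [AGM _] := leif_AGM (fun i (_ : i \in predT) => d_ge0 i).
move: AGM; rewrite /= cardT size_enum_ord prod_d -trH -[X in X <= _ -> _](expr1n C n).
by rewrite ler_pXn2r ?nnegrE ?divr_ge0 // ler_pdivlMr ?ltr0n // mul1r.
Qed.

Lemma trmxC_prodmx n J (F : 'I_J -> 'M[C]_n) :
  (\prod_(j < J) F j)^t* = \prod_(j < J) (F (rev_ord j))^t*.
Proof.
elim: J F => [|J IHJ] F; first by rewrite !big_ord0 -idmxE trmx1 map_mx1.
rewrite big_ord_recr big_ord_recl -mulmxE trmx_mul map_mxM IHJ mulmxE /=.
congr (_ * _); first by congr (_ ^t* ); congr F; apply: val_inj; rewrite /= subn1.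
by apply: eq_bigr => j _; congr (_ ^t* ); congr F; apply: val_inj; rewrite /= subSS.
Qed.

Lemma mxtrace_palindrome_ge n J (F : 'I_J -> 'M[C]_n) :
  (forall j, (F j)^t* = F j) -> (forall j, \det (F j) ^+ 2 = 1) ->
  n%:R <= \tr ((\prod_(j < J) F j) * \prod_(j < J) F (rev_ord j)).
Proof.
move=> F_herm detF.
set M := \prod_(j < J) F j.
have -> : \prod_(j < J) F (rev_ord j) = M^t*.
  by rewrite trmxC_prodmx; apply: eq_bigr => j _; rewrite F_herm.
apply: mxtrace_gram_ge; rewrite det_gram.
have : \det M ^+ 2 == 1 by rewrite det_prodmx -prodrXl big1.
by rewrite sqrf_eq1 => /orP[] /eqP->; rewrite ?rmorphN rmorph1 ?mulrNN mulr1.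
Qed.

End GramMatrix.

Section Involution.
Variables (R : comNzRingType) (n : nat) (P Q : 'M[R]_n).
Hypotheses (PP : P *m P = 1%:M) (QQ : Q *m Q = 1%:M) (QP : Q *m P = - (P *m Q)).

Lemma exprZ_invol (c : R) k :
  (c *: P) ^+ k = c ^+ k *: (if odd k then P else 1%:M).
Proof.
elim: k => [|k IHk]; first by rewrite expr0 scale1r idmxE.
rewrite exprS IHk -mulmxE -scalemxAr -scalemxAl scalerA -exprSr /=.
by case: (odd k); rewrite /= ?PP ?mulmx1.
Qed.

Lemma det_add_scale_invol_sqr (c s : R) :
  \det (c%:M + s *: P) ^+ 2 = (c ^+ 2 - s ^+ 2) ^+ n.
Proof.
have prod_conj : (c%:M + s *: P) *m (c%:M - s *: P) = (c ^+ 2 - s ^+ 2)%:M.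
  rewrite mulmxDl !mulmxBr !mul_mx_scalar -!scalemxAr -!scalemxAl PP !mul_scalar_mx.
  by apply/matrixP => i j; rewrite !mxE; case: (i == j) => /=; ring.
have conjQ : Q *m (c%:M + s *: P) *m Q = c%:M - s *: P.
  rewrite mulmxDr mulmxDl mul_mx_scalar -scalemxAr -!scalemxAl QQ QP mulNmx -mulmxA QQ.
  by rewrite mulmx1 scalemx1 scalerN.
have detQ : \det Q * \det Q = 1 by rewrite -det_mulmx QQ det1.
rewrite -(det_scalar n) -prod_conj det_mulmx -conjQ !det_mulmx expr2.
by rewrite [X in _ = _ * X]mulrAC detQ mul1r.
Qed.

End Involution.

Section HyperbolicExpm.
Local Open Scope complex_scope.
Local Open Scope classical_set_scope.
Variable R : realType.
Implicit Types x : R.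

Definition cosh x := (expR x + expR (- x)) / 2.
Definition sinh x := (expR x - expR (- x)) / 2.

Lemma cosh_sqr_sub_sinh_sqr x : cosh x ^+ 2 - sinh x ^+ 2 = 1.
Proof.
have expRxN : expR x * expR (- x) = 1 by rewrite -expRD subrr expR0.
by rewrite /cosh /sinh; apply: eq_trans expRxN; field.
Qed.

Lemma cvg_series_exp_coeff x : series (exp_coeff x) @ \oo --> expR x.
Proof.
have -> : expR x = limn (series (exp_coeff x)) by rewrite expRE exp_coeffE.
exact: is_cvg_series_exp_coeff.
Qed.

Lemma exp_coeffN x k : exp_coeff (- x) k = (-1) ^+ k * exp_coeff x k.
Proof. by rewrite /exp_coeff /= -[in LHS]mulN1r exprMn mulrA. Qed.

Lemma limn_series_exp_coeff_comb x (a b : R) :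
  limn (series (fun k => a * exp_coeff x k + b * exp_coeff (- x) k)) =
  a * expR x + b * expR (- x).
Proof.
apply: cvg_lim => //; rewrite [X in X @ _]/series /=.
under eq_fun do rewrite big_split -!mulr_sumr.
by apply: cvgD; apply: cvgMr; exact: cvg_series_exp_coeff.
Qed.

Lemma expm_invol n (P : 'M[R[i]]_n) x : P *m P = 1%:M ->
  expm (x%:C *: P) = (cosh x)%:C%:M + (sinh x)%:C *: P.
Proof.
move=> PP.
rewrite -scalemx1; apply/matrixP => a b.
set u := P a b; set v := (1%:M : 'M[R[i]]_n) a b.
have entry k : ((x%:C *: P) ^+ k) a b / (k`!)%:R =
    (v + u) * (exp_coeff x k / 2)%:C + (v - u) * (exp_coeff (- x) k / 2)%:C.
  rewrite exprZ_invol // -rmorphXn mxE exp_coeffN /exp_coeff /= -signr_odd.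
  rewrite !(rmorphM, rmorphXn, fmorphV, rmorph_nat, rmorphN1).
  have fact_neq0 : (k`!)%:R != 0 :> R[i] by rewrite pnatr_eq0 -lt0n fact_gt0.
  by case: (odd k); rewrite /= -/u -/v ?expr1 ?expr0; field.
(* [expm] takes the limits of the real and imaginary parts separately; each is a
   real combination of the exponential series at [x] and [- x]. *)
have limn_part (f : R[i] -> R) :
    (forall z w r t, f (z * r%:C + w * t%:C) = f z * r + f w * t) ->
    limn (series (fun k => f (((x%:C *: P) ^+ k) a b / (k`!)%:R))) =
    f (v + u) / 2 * expR x + f (v - u) / 2 * expR (- x).
  move=> f_lin; under eq_fun do rewrite entry f_lin.
  rewrite -limn_series_exp_coeff_comb; congr (limn (series _)).
  by apply/funext => k; ring.
rewrite mxE limn_part; last by move=> [? ?] [? ?] r t /=; ring.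
rewrite limn_part; last by move=> [? ?] [? ?] r t /=; ring.
rewrite mxE [(_ *: 1%:M) a b]mxE [(_ *: P) a b]mxE -/u -/v.
clear entry limn_part; case: u => ur ui; case: v => vr vi; apply/eqP.
rewrite eq_complex /=.
by apply/andP; split; apply/eqP; rewrite /cosh /sinh; field.
Qed.

End HyperbolicExpm.

Lemma eq_from_bits n a b : (a < 2 ^ n)%N -> (b < 2 ^ n)%N ->
  (forall k, (k < n)%N -> odd (a %/ 2 ^ k) = odd (b %/ 2 ^ k)) -> a = b.
Proof.
elim: n a b => [|n IHn] a b; first by rewrite expn0 !ltnS !leqn0 => /eqP-> /eqP->.
move=> a_lt b_lt eq_bits.
have := eq_bits 0%N isT; rewrite expn0 !divn1 => eq_odd.
rewrite (divn_eq a 2) (divn_eq b 2) !modn2 eq_odd; congr (_ * _ + _)%N.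
apply: IHn; rewrite ?ltn_divLR // -?expnSr // => k k_lt.
by have := eq_bits k.+1 k_lt; rewrite expnS !divnMA.
Qed.

Lemma qbit_inj n (a b : 'I_(2 ^ n)) : (forall k, qbit a k = qbit b k) -> a = b.
Proof.
move=> eq_qbit; apply: val_inj; apply: (@eq_from_bits n); rewrite ?ltn_ord // => k k_lt.
have := congr1 val (eq_qbit (Ordinal k_lt)).
by rewrite /qbit /= !inordK ?ltnS ?leq_b1 // => /(congr1 odd); rewrite !oddb.
Qed.

Lemma qbits_bij n : bijective (fun a : 'I_(2 ^ n) => [ffun k => qbit a k]).
Proof.
apply: inj_card_bij; last by rewrite card_ffun !card_ord.
by move=> a b /ffunP eq_ab; apply: qbit_inj => k; have := eq_ab k; rewrite !ffunE.
Qed.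

Section KroneckerProduct.
Variable R : comNzRingType.

Definition kronmx n (A : 'I_n -> 'M[R]_2) : 'M[R]_(2 ^ n) :=
  \matrix_(a, b) \prod_(k < n) A k (qbit a k) (qbit b k).

Lemma mul_kronmx n (A B : 'I_n -> 'M[R]_2) :
  kronmx A *m kronmx B = kronmx (fun k => A k *m B k).
Proof.
apply/matrixP => a b; rewrite !mxE.
under [RHS]eq_bigr do rewrite mxE.
rewrite bigA_distr_bigA (reindex _ (onW_bij _ (qbits_bij n))) /=.
by apply: eq_bigr => c _; rewrite !mxE -big_split; apply: eq_bigr => k _; rewrite ffunE.
Qed.

Lemma kronmx1 n : kronmx (fun _ : 'I_n => 1%:M) = 1%:M.
Proof.
apply/matrixP => a b; rewrite !mxE.
have [<-|neq_ab] := eqVneq a b; first by apply: big1 => k _; rewrite mxE eqxx.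
have [k neq_k] : exists k, qbit a k != qbit b k.
  apply/existsP; apply: contraT; rewrite negb_exists => /forallP eq_k.
  by rewrite (qbit_inj (fun k => eqP (negbNE (eq_k k)))) eqxx in neq_ab.
by rewrite (bigD1 k) //= mxE (negbTE neq_k) mul0r.
Qed.

Lemma kronmx_scale_factor n (A B : 'I_n -> 'M[R]_2) k0 (c : R) :
  A k0 = c *: B k0 -> (forall k, k != k0 -> A k = B k) -> kronmx A = c *: kronmx B.
Proof.
move=> eq_k0 eq_k; apply/matrixP => a b.
rewrite !mxE (bigD1 k0) //= [in RHS](bigD1 k0) //= eq_k0 mxE -mulrA.
by congr (_ * (_ * _)); apply: eq_bigr => k /eq_k->.
Qed.

End KroneckerProduct.

Section PauliAlgebra.
Local Open Scope complex_scope.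
Variable R : realType.

Lemma pauli1_0 : pauli1 R 0 = 1%:M.
Proof. by apply/matrixP => [[[|[|//]] ?] [[|[|//]] ?]]; rewrite !mxE. Qed.

Lemma pauli1_sqr u : pauli1 R u *m pauli1 R u = 1%:M.
Proof.
apply/matrixP => i j; rewrite !mxE !big_ord_recr !big_ord0 /= !mxE.
case: u => [[|[|[|[|//]]]] ?]; case: i => [[|[|//]] ?]; case: j => [[|[|//]] ?];
  rewrite /= ?eqE /=; simpc.
all: by [].
Qed.

Lemma pauli1_anticomm u v : u != 0 -> v != 0 -> u != v ->
  pauli1 R u *m pauli1 R v = - (pauli1 R v *m pauli1 R u).
Proof.
case: u => [[|[|[|[|//]]]] ?]; case: v => [[|[|[|[|//]]]] ?] //= _ _ _;
apply/matrixP => i j; rewrite !mxE !big_ord_recr !big_ord0 /= !mxE;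
case: i => [[|[|//]] ?]; case: j => [[|[|//]] ?]; rewrite /= ?eqE /=; simpc.
all: by [].
Qed.

Lemma pauli_stringE n (s : {ffun 'I_n -> 'I_4}) :
  pauli_string R s = kronmx (fun k => pauli1 R (s k)).
Proof. by []. Qed.

Lemma pauli_string_sqr n (s : {ffun 'I_n -> 'I_4}) :
  pauli_string R s *m pauli_string R s = 1%:M.
Proof.
rewrite pauli_stringE mul_kronmx -(kronmx1 _ n).
by congr kronmx; apply/funext => k; rewrite pauli1_sqr.
Qed.

Lemma pauli_string_anticomm n (s : {ffun 'I_n -> 'I_4}) : nonidentity s ->
  exists Q, Q *m Q = 1%:M /\ Q *m pauli_string R s = - (pauli_string R s *m Q).
Proof.
(* Q acts as X or Z, whichever differs from s, on a qubit where s is not I. *)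
case=> k0 s_k0.
pose v : 'I_4 := if s k0 == 1 then 3 else 1.
pose t : {ffun 'I_n -> 'I_4} := [ffun k => if k == k0 then v else 0].
exists (pauli_string R t); split; first exact: pauli_string_sqr.
rewrite !pauli_stringE !mul_kronmx -scaleN1r; apply: (kronmx_scale_factor (k0 := k0)).
  rewrite ffunE eqxx scaleN1r; apply: pauli1_anticomm => //; rewrite /v.
    by case: ifP.
  by case: ifP => [/eqP->|] //; rewrite eq_sym => ->.
by move=> k /negbTE k_neq; rewrite ffunE k_neq pauli1_0 mul1mx mulmx1.
Qed.

End PauliAlgebra.

Section ComplexMatrices.
Local Open Scope complex_scope.
Local Open Scope sesquilinear_scope.
Variable R : realType.

Lemma adjmxE n (A : 'M[R[i]]_n) : adjmx A = A^t*.
Proof. by apply/matrixP => a b; rewrite !mxE. Qed.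

Lemma trmxC_real_comb n (P : 'M[R[i]]_n) (c s : R) : P^t* = P ->
  (c%:C%:M + s%:C *: P)^t* = c%:C%:M + s%:C *: P.
Proof.
move=> /matrixP P_herm; apply/matrixP => a b.
have real_conj (x : R) : Num.conj (x%:C : R[i]) = x%:C.
  by apply: conj_Creal; apply/complex_realP; exists x.
have := P_herm a b; rewrite !mxE => P_ab.
by rewrite rmorphD rmorphMn rmorphM /= !real_conj P_ab eq_sym.
Qed.

End ComplexMatrices.

Local Open Scope complex_scope.

Theorem mainTheorem2 (R : realType) (n : nat) (tau : R) (J : nat)
    (P : 'I_J -> 'M[R[i]]_(2 ^ n)) :
  (1 <= n)%N ->
  (forall j, is_hermitian (P j)) ->
  (forall j, exists (sgn : bool) (s : {ffun 'I_n -> 'I_4}),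
      nonidentity s /\ P j = ((-1) ^+ sgn) *: pauli_string R s) ->
  let E := fun j => expm (- (tau%:C) *: P j) in
  ((2 ^ n)%:R : R[i]) <=
    \tr ((\prod_(j < J) E j) * 1%:M * (\prod_(j < J) E (rev_ord j))).
Proof.
move=> _ P_herm P_pauli /=.
have PP j : P j *m P j = 1%:M.
  have [sgn [s [_ ->]]] := P_pauli j.
  by rewrite -scalemxAl -scalemxAr scalerA -expr2 sqrr_sign scale1r pauli_string_sqr.
have EE j : expm (- tau%:C *: P j) = (cosh (- tau))%:C%:M + (sinh (- tau))%:C *: P j.
  by rewrite -rmorphN expm_invol.
rewrite mulr1; apply: mxtrace_palindrome_ge => j; rewrite EE.
  by apply: trmxC_real_comb; rewrite -adjmxE P_herm.
have [Q [QQ QP]] : exists Q, Q *m Q = 1%:M /\ Q *m P j = - (P j *m Q).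
  have [sgn [s [s_nonid ->]]] := P_pauli j.
  have [Q [QQ QS]] := pauli_string_anticomm R s_nonid.
  by exists Q; rewrite -scalemxAr -scalemxAl QS scalerN.
rewrite (det_add_scale_invol_sqr (PP j) QQ QP).
by rewrite -!rmorphXn -rmorphB cosh_sqr_sub_sinh_sqr rmorph1 expr1n.
Qed.
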